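(* Let $W$ be a symmetric binary-input discrete memoryless channel with finite output alphabet $\mathcal{Y}$, let $S_1=|\{y\in\mathcal{Y}:1\cdot y=y\}|$ and $S_2=|\{y\in\mathcal{Y}:1\cdot y\ne y\}|$, and let $N=2^n$. Then the number $n_c(N,0,S_1,S_2)$ of distinct values of $W_N^{(0)}(\mathbf{y})$ as $\mathbf{y}$ ranges over $\mathcal{Y}^N$ satisfies $$n_c(N,0,S_1,S_2)\le\binom{N+S_2/2+S_1-1}{S_2/2+S_1-1}.$$
   Context: Symmetric channel: $W(y|x)$, $x\in\{0,1\}$, with an involution $y\mapsto 1\cdot y$ of $\mathcal{Y}$ such that $W(1\cdot y|0)=W(y|1)$ and $W(1\cdot y|1)=W(y|0)$ ($S_2$ is thus even). $W^N(\mathbf{y}|\mathbf{x})=\prod_j W(y_j|x_j)$. With $G_N=F^{\otimes n}$, $F=\begin{pmatrix}1&0\\1&1\end{pmatrix}$ over $\mathbb{F}_2$ (invertible, so its row space is $\mathbb{F}_2^N$), $W_N^{(0)}(\mathbf{y})=\frac{1}{2^{N-1}}\sum_{\mathbf{c}\in\mathbb{F}_2^N}W^N(\mathbf{y}|\mathbf{c})$. *)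

From mathcomp Require Import all_boot all_order all_algebra.
Set Implicit Arguments. Unset Strict Implicit. Unset Printing Implicit Defensive.
Import Order.TTheory GRing.Theory Num.Theory.
Local Open Scope ring_scope.

(* A binary-input channel with finite output alphabet Y: W y x = W(y|x),
   input x : bool (false = 0, true = 1). *)
Definition is_channel (R : realFieldType) (Y : finType) (W : Y -> bool -> R) :=
  (forall y x, 0 <= W y x) /\ (forall x, \sum_(y : Y) W y x = 1).

(* Symmetry with respect to the involution inv (y |-> 1 . y). *)
Definition symmetric_channel (R : realFieldType) (Y : finType)
    (W : Y -> bool -> R) (inv : Y -> Y) :=
  involutive inv /\
  (forall y, W (inv y) false = W y true) /\
  (forall y, W (inv y) true = W y false).

Definition WN (R : realFieldType) (Y : finType) (W : Y -> bool -> R) (N : nat)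
    (y : {ffun 'I_N -> Y}) (c : {ffun 'I_N -> bool}) : R :=
  \prod_(j < N) W (y j) (c j).

Definition WN0 (R : realFieldType) (Y : finType) (W : Y -> bool -> R) (N : nat)
    (y : {ffun 'I_N -> Y}) : R :=
  (2 ^+ N.-1)^-1 * \sum_(c : {ffun 'I_N -> bool}) WN W y c.

From mathcomp Require Import all_boot all_algebra.
Set Implicit Arguments. Unset Strict Implicit. Unset Printing Implicit Defensive.
Import GRing.Theory.

(* Summing over all codewords factorizes: W_N^(0)(y) is 2^(1-N) times the
   product of s(y_j) = W(y_j|0) + W(y_j|1), and symmetry gives s(1.y) = s(y).
   So W_N^(0)(y) is a symmetric function of the orbits of the letters y_j
   under the involution, of which there are S1 + S2/2; it therefore takes at
   most as many values as there are multisets of N such orbits. *)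

Lemma size_undup_subset (T : eqType) (s t : seq T) :
  {subset s <= t} -> size (undup s) <= size (undup t).
Proof.
move=> sub_st; apply: uniq_leq_size (undup_uniq s) _ => x.
by rewrite !mem_undup => /sub_st.
Qed.

Section SymmetricFunctionsOfWords.
Variables (N : nat) (T : eqType).

Lemma size_undup_sym_ord k (F : seq 'I_k -> T) :
  (forall s t, perm_eq s t -> F s = F t) ->
  size (undup [seq F (codom x) | x : {ffun 'I_N -> 'I_k}]) <= 'C(N + k - 1, k - 1).
Proof.
case: k F => [|k] F Fsym.
  apply: leq_trans (size_undup _) _.
  by rewrite size_image card_ffun !card_ord bin0; case: N => // m; rewrite exp0n.
pose sort_word (x : {ffun 'I_N -> 'I_k.+1}) : N.-tuple 'I_k.+1 :=
  sort_tuple (fun a b : 'I_k.+1 => a <= b) [tuple x j | j < N].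
pose sorted_words := [set t : N.-tuple 'I_k.+1 | sorted leq (map val t)].
have F_sort_word (x : {ffun 'I_N -> 'I_k.+1}) : F (codom x) = F (sort_word x).
  by apply: Fsym; rewrite perm_sym /= perm_sort codomE enumT.
apply: (leq_trans (size_undup_subset
  (t := [seq F t | t : N.-tuple 'I_k.+1 in sorted_words]) _)).
  move=> _ /imageP[x _ ->]; rewrite F_sort_word.
  apply: map_f; rewrite mem_enum inE sorted_map.
  by apply: sort_sorted => a b; apply: leq_total.
apply: leq_trans (size_undup _) _.
rewrite size_image card_sorted_tuples subn1 addnS /= subn1 /=.
by rewrite -bin_sub ?leq_addr // addKn.
Qed.

Lemma size_undup_sym (X : finType) (F : seq X -> T) :
  (forall s t, perm_eq s t -> F s = F t) ->
  size (undup [seq F (codom x) | x : {ffun 'I_N -> X}])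
    <= 'C(N + #|X| - 1, #|X| - 1).
Proof.
move=> Fsym; pose F' (s : seq 'I_#|X|) := F (map enum_val s).
have F'sym s t : perm_eq s t -> F' s = F' t by move/(perm_map enum_val)/Fsym.
apply: leq_trans (size_undup_sym_ord F'sym).
apply: size_undup_subset => _ /imageP[x _ ->].
have -> : codom x = map enum_val (codom [ffun j => enum_rank (x j)]).
  rewrite [in RHS]codomE -map_comp codomE; apply: eq_map => j /=.
  by rewrite ffunE enum_rankK.
exact: codom_f.
Qed.

End SymmetricFunctionsOfWords.

Section InvolutionRepresentatives.
Variables (Y : finType) (inv : Y -> Y).
Hypothesis invK : involutive inv.

Definition inv_reps := [set y | enum_rank y <= enum_rank (inv y)].

Definition inv_rep y := if y \in inv_reps then y else inv y.

Lemma inv_rep_in y : inv_rep y \in inv_reps.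
Proof.
rewrite /inv_rep; case: ifP => // /negbT.
by rewrite !inE invK -ltnNge => /ltnW.
Qed.

Lemma inv_rep_invariant (T : Type) (f : Y -> T) :
  (forall y, f (inv y) = f y) -> forall y, f (inv_rep y) = f y.
Proof. by move=> finv y; rewrite /inv_rep; case: ifP. Qed.

Lemma card_inv_reps :
  #|inv_reps| = #|[set y | inv y == y]| + #|[set y | inv y != y]| %/ 2.
Proof.
set F := [set y | inv y == y]; set D := [set y | inv y != y].
have rank_swap y : inv y != y ->
    (enum_rank (inv y) <= enum_rank y) = ~~ (enum_rank y <= enum_rank (inv y)).
  move=> ne; rewrite -ltnNge ltn_neqAle.
  by rewrite (inj_eq val_inj) (inj_eq enum_rank_inj) ne.
have D_out : D :\: inv_reps = inv @: (D :&: inv_reps).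
  apply/setP => y; rewrite !inE; apply/idP/imsetP.
    move=> /andP[y_out ne]; exists (inv y); last by rewrite invK.
    by rewrite !inE invK eq_sym ne rank_swap.
  move=> [x]; rewrite !inE => /andP[ne x_in] ->; rewrite invK eq_sym ne andbT.
  by have := rank_swap (inv x); rewrite invK eq_sym => <-.
have card_D : #|D| = (#|D :&: inv_reps|).*2.
  by rewrite -(cardsID inv_reps D) D_out card_imset ?addnn //; apply: can_inj invK.
have card_reps : #|inv_reps| = #|F| + #|D :&: inv_reps|.
  rewrite -(cardsID F inv_reps); congr (_ + _); apply: eq_card => y; rewrite !inE.
    by case: eqP => [->|]; rewrite ?leqnn ?andbF.
  by rewrite andbC.
by rewrite card_reps card_D -muln2 mulnK.
Qed.

End InvolutionRepresentatives.

Local Open Scope ring_scope.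

Lemma WN0E (R : realFieldType) (Y : finType) (W : Y -> bool -> R) N y :
  WN0 W y = (2 ^+ N.-1)^-1 * \prod_(j < N) (W (y j) false + W (y j) true).
Proof.
rewrite /WN0 /WN -(bigA_distr_bigA (fun j b => W (y j) b)) /=.
by congr (_ * _); apply: eq_bigr => j _; rewrite big_bool addrC.
Qed.

Lemma symmetric_channel_sum (R : realFieldType) (Y : finType)
    (W : Y -> bool -> R) (inv : Y -> Y) :
  symmetric_channel W inv ->
  forall y, W (inv y) false + W (inv y) true = W y false + W y true.
Proof. by case=> _ [W0 W1] y; rewrite W0 W1 addrC. Qed.

Theorem theorem5 (R : realFieldType) (Y : finType) (W : Y -> bool -> R)
    (inv : Y -> Y) (n : nat) :
  is_channel W -> symmetric_channel W inv ->
  let N := (2 ^ n)%N in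
  let S1 := #|[set y : Y | inv y == y]| in
  let S2 := #|[set y : Y | inv y != y]| in
  (size (undup (codom (@WN0 R Y W N))) <=
     'C(N + S2 %/ 2 + S1 - 1, S2 %/ 2 + S1 - 1))%N.
Proof.
move=> _ symW; cbv zeta; set N := (2 ^ n)%N.
have invK : involutive inv by case: symW.
pose X := {y | y \in inv_reps inv}.
pose s y := W y false + W y true.
pose F (t : seq X) := (2 ^+ N.-1)^-1 * \prod_(x <- t) s (val x).
have F_sym t t' : perm_eq t t' -> F t = F t'.
  by move=> tt'; rewrite /F (perm_big _ tt').
have WN0_F (y : {ffun 'I_N -> Y}) :
    WN0 W y = F (codom [ffun j => Sub (inv_rep inv (y j)) (inv_rep_in invK (y j)) : X]).
  rewrite WN0E /F codomE big_map big_enum /=; congr (_ * _).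
  apply: eq_bigr => j _; rewrite ffunE /=.
  by rewrite (inv_rep_invariant (f := s)) //; exact: symmetric_channel_sum.
have card_X :
    #|{: X}| = (#|[set y | inv y != y]| %/ 2 + #|[set y | inv y == y]|)%N.
  by rewrite card_sig addnC -card_inv_reps //; apply: eq_card.
rewrite -addnA -card_X; apply: leq_trans (size_undup_sym N F_sym).
apply: size_undup_subset => _ /codomP[y ->].
by rewrite WN0_F; apply: map_f; rewrite mem_enum.
Qed.
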